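(* There exist measurable subsets \(A\subset\mathbb{R}^{\mathbb{N}}\) that are atoms for \(\mu\).
   Context: Let $\mathcal{B}$ be the Borel $\sigma$-algebra of $\mathbb{R}$, $\lambda$ the Lebesgue measure, and $\mathcal{B}_{\infty}$ the $\sigma$-algebra on $\mathbb{R}^{\mathbb{N}}$ generated by the cylinder sets $\prod_{i=1}^{m}C_{i}\times\prod_{i=m+1}^{\infty}\mathbb{R}$ with $C_i\in\mathcal{B}$, $m\in\mathbb{N}$. Let $\mathcal{F}(\mathcal{B},\lambda)$ be the set of finite rectangles $\prod_{i\in\mathbb{N}}C_{i}$ with $C_i\in\mathcal{B}$ and $\prod_{i}\lambda(C_i)\in[0,\infty)$, with $\mathrm{vol}(\prod_{i}C_i):=\prod_i\lambda(C_i)$. The measure $\mu$ is the restriction to $\mathcal{B}_{\infty}$ of the outer measure $\mu^{\ast}(A):=\inf\{\sum_{n}\mathrm{vol}(\mathscr{C}_{n}) : \mathscr{C}_{n}\in\mathcal{F}(\mathcal{B},\lambda),\ A\subset\bigcup_{n}\mathscr{C}_{n}\}$ ($\inf\varnothing=\infty$). A measurable set $A$ with $\mu(A)>0$ is an atom if every measurable $B\subset A$ satisfies $\mu(B)\in\{0,\mu(A)\}$. *)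

From HB Require Import structures.
From mathcomp Require Import all_boot all_order all_algebra.
From mathcomp Require Import all_classical all_reals all_analysis.
Set Implicit Arguments. Unset Strict Implicit. Unset Printing Implicit Defensive.
Import Order.TTheory GRing.Theory Num.Theory.
Import numFieldNormedType.Exports.
Local Open Scope classical_set_scope.
Local Open Scope ring_scope.

Section Defs.
Variable R : realType.

Definition cylinder (A : set (nat -> R)) : Prop :=
  exists (m : nat) (C : nat -> set R),
    (forall i, measurable (C i)) /\
    A = [set x | forall i, (i < m)%N -> C i (x i)].

Definition Binf_measurable (A : set (nat -> R)) : Prop :=
  <<s cylinder >> A.

Definition rect (C : nat -> set R) : set (nat -> R) :=
  [set x | forall i, C i (x i)].

Definition finrect_vol (C : nat -> set R) (r : R) : Prop :=
  (forall i, measurable (C i)) /\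
  ((fun n : nat => (\prod_(i < n) (lebesgue_measure (C i)))%E) @ \oo --> r%:E)%E.

(* outer measure mu^* : inf of sum of volumes of countable covers by
   finite rectangles (inf of empty set is +oo) *)
Definition mu_star (A : set (nat -> R)) : \bar R :=
  ereal_inf [set s : \bar R | exists (C : nat -> nat -> set R) (r : nat -> R),
      (forall n, finrect_vol (C n) (r n)) /\
      A `<=` \bigcup_n rect (C n) /\
      s = (\sum_(0 <= n <oo) (r n)%:E)%E].

(* mu = restriction of mu^* to B_infinity; atoms of mu *)
Definition mu_atom (A : set (nat -> R)) : Prop :=
  Binf_measurable A /\ (0 < mu_star A)%E /\
  forall B : set (nat -> R), Binf_measurable B -> B `<=` A ->
    mu_star B = 0%E \/ mu_star B = mu_star A.

End Defs.

(* The atom is the rectangle A = prod_i D_i with D_i = [0, 1/2] for odd i and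
   D_i = R for even i.  A diagonal argument shows that A has no countable cover
   by finite rectangles C_m: choose the i-th coordinate outside every null side
   C_m,i and, for i = 2m, outside C_m,i when it has finite measure; a finite
   rectangle has a null side or only sides of finite measure.  So mu(A) = +oo.
   If B is a subset of A covered by finite rectangles C_n, it is also covered by
   the C_n ∩ A, which have volume 0: when the partial products of the
   lambda(C_n,i) converge to a positive limit the factors tend to 1, so at odd
   i the factors lambda(C_n,i ∩ [0, 1/2]) eventually lose a fixed ratio.
   Hence every measurable subset of A has measure 0 or +oo. *)

From mathcomp Require Import all_boot all_order all_algebra.
From mathcomp Require Import all_classical all_reals all_analysis.
From mathcomp Require Import lra.
Set Implicit Arguments.
Unset Strict Implicit.
Unset Printing Implicit Defensive.
Import Order.TTheory GRing.Theory Num.Theory.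
Import numFieldNormedType.Exports.
Local Open Scope classical_set_scope.
Local Open Scope ring_scope.

Section partial_products.
Variable R : realType.
Implicit Types (u : nat -> R) (q r : R).

Lemma cvg_prod_factor1 u r : r != 0 ->
  (\prod_(i < n) u i) @[n --> \oo] --> r -> u n @[n --> \oo] --> (1 : R).
Proof.
move=> r0 ur.
have urS : (\prod_(i < n.+1) u i) @[n --> \oo] --> r.
  by rewrite (cvg_shiftS (fun n => \prod_(i < n) u i)).
rewrite -(divff r0); apply: (cvg_trans _ (cvgM urS (cvgV r0 ur))).
apply: near_eq_cvg; near=> n => /=.
rewrite big_ord_recr /= mulrAC divff ?mul1r //.
by near: n; exact: cvgr_neq0 ur r0.
Unshelve. all: by end_near. Qed.

Lemma cvg_prod_odd_contract0 u q : (forall i, 0 <= u i <= 1) -> q < 1 ->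
  (\forall i \near \oo, odd i -> u i <= q) ->
  (\prod_(i < n) u i) @[n --> \oo] --> 0.
Proof.
move=> u01 q1 [N _ uq].
have u0 i : 0 <= u i by case/andP: (u01 i).
have prod_ge0 n : 0 <= \prod_(i < n) u i by apply: prodr_ge0.
have pair_le m : (N <= m)%N -> u m * u m.+1 <= q.
  move=> Nm; have [/andP[? ?] /andP[? ?]] := (u01 m, u01 m.+1).
  have [om|em] := boolP (odd m).
    by have := uq m Nm om; nra.
  by have := uq m.+1 (leqW Nm) em; nra.
have q0 : 0 <= q.
  by have := pair_le N (leqnn N); have := u0 N; have := u0 N.+1; nra.
have bound k n : (N + k.*2 <= n)%N -> \prod_(i < n) u i <= q ^+ k.
  elim: k n => [n _|k IH [|[|m]]]; first by rewrite expr0 prodr_ile1.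
  1,2: by rewrite doubleS !addnS.
  rewrite doubleS !addnS !ltnS => hm.
  rewrite !big_ord_recr /= -mulrA exprSr.
  rewrite ler_pM ?mulr_ge0 ?IH ?pair_le ?prod_ge0 //.
  by apply: leq_trans hm; rewrite leq_addr.
apply/cvgr0Pnorm_lt => e e0.
have normq1 : `|q| < 1 by rewrite ger0_norm.
have [k _ qk] := (cvgr0Pnorm_lt _).1 (cvg_expr normq1) e e0.
near=> n; rewrite ger0_norm // (le_lt_trans (bound k n _)) //.
  by near: n; exact: nbhs_infty_ge.
by have := qk k (leqnn k); rewrite ger0_norm ?exprn_ge0.
Unshelve. all: by end_near. Qed.

Lemma cvg_prod_odd_bounded0 (phi gam : nat -> R) r c :
  (forall i, 0 < phi i) -> (forall i, 0 <= gam i <= phi i) ->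
  c < 1 -> (forall i, odd i -> gam i <= c) ->
  (\prod_(i < n) phi i) @[n --> \oo] --> r ->
  (\prod_(i < n) gam i) @[n --> \oo] --> 0.
Proof.
move=> phi0 gam_phi c1 gamc phir.
have gam0 i : 0 <= gam i by case/andP: (gam_phi i).
have [r0|r_neq0] := eqVneq r 0.
  apply: (@squeeze_cvgr _ _ _ _ (cst 0) (fun n => \prod_(i < n) phi i)).
  - by apply: nearW => n; rewrite prodr_ge0 ?ler_prod // => i _; apply/gam_phi.
  - exact: cvg_cst.
  - by rewrite -r0.
have phi1 : phi n @[n --> \oo] --> (1 : R) by exact: cvg_prod_factor1 phir.
pose rho i := gam i / phi i.
have -> : (fun n => \prod_(i < n) gam i) =
          (fun n => \prod_(i < n) rho i * \prod_(i < n) phi i).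
  apply/funext => n; rewrite -big_split; apply: eq_bigr => i _ /=.
  by rewrite divfK ?gt_eqF.
rewrite -(mul0r r); apply: cvgM phir.
have c0 : 0 <= c := le_trans (gam0 1%N) (gamc 1%N isT).
pose q := (1 + c) / 2.
have q0 : 0 < q by rewrite /q; lra.
have cq1 : c / q < 1 by rewrite ltr_pdivrMr // /q; lra.
apply: (@cvg_prod_odd_contract0 rho q).
- move=> i; case/andP: (gam_phi i) => g0 gp.
  by rewrite /rho divr_ge0 ?(ltW (phi0 i)) // ler_pdivrMr // mul1r.
- by rewrite /q; lra.
- near=> i => oi; rewrite /rho ler_pdivrMr //.
  have : c / q <= phi i.
    by near: i; exact: cvgr_ge phi1 _ cq1.
  rewrite ler_pdivrMr // => cphi; have := gamc i oi; nra.
Unshelve. all: by end_near. Qed.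

End partial_products.

Section extended_partial_products.
Variable R : realType.
Local Open Scope ereal_scope.

Lemma cvg_prode_factor_lty (f : nat -> \bar R) (r : R) : (forall i, 0 < f i) ->
  (\prod_(i < n) f i) @[n --> \oo] --> r%:E -> forall j, f j < +oo.
Proof.
move=> f0 /fine_cvgP[prod_fin _] j; rewrite ltey; apply/eqP => fj.
have /filter_ex[n [jn]] :
    \forall n \near \oo, (j < n)%N /\ \prod_(i < n) f i \is a fin_num.
  by near=> n; split; near: n; [exact: nbhs_infty_gt|exact: prod_fin].
rewrite (bigD1 (Ordinal jn)) //= fj gt0_mulye //.
by apply: (big_ind (fun x => 0 < x)) => // x y; exact: mule_gt0.
Unshelve. all: by end_near. Qed.

Lemma cvg_prode_odd_bounded0 (f g : nat -> \bar R) (r c : R) :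
  (forall i, 0 <= g i <= f i) -> (c < 1)%R ->
  (forall i, odd i -> g i <= c%:E) ->
  (\prod_(i < n) f i) @[n --> \oo] --> r%:E ->
  (\prod_(i < n) g i) @[n --> \oo] --> 0.
Proof.
move=> gf c1 gc fr.
have g0 i : 0 <= g i by case/andP: (gf i).
have [[j fj0]|f_neq0] := pselect (exists j, f j = 0).
  apply: cvg_near_cst; near=> n.
  have jn : (j < n)%N by near: n; exact: nbhs_infty_gt.
  have gj0 : g j = 0.
    by apply/eqP; rewrite eq_le g0 andbT -fj0; case/andP: (gf j).
  by rewrite (bigD1 (Ordinal jn)) //= gj0 mul0e.
have f0 i : 0 < f i.
  rewrite lt0e (le_trans (g0 i)) ?andbT; last by case/andP: (gf i).
  by apply/eqP => fi0; apply: f_neq0; exists i.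
have flty : forall i, f i < +oo by exact: cvg_prode_factor_lty f0 fr.
have fE i : f i = (fine (f i))%:E by rewrite fineK // ge0_fin_numE ?flty // ltW.
have gE i : g i = (fine (g i))%:E.
  rewrite fineK // ge0_fin_numE // (le_lt_trans _ (flty i)) //.
  by case/andP: (gf i).
have prodE (h : nat -> \bar R) : (forall i, h i = (fine (h i))%:E) ->
    (fun n => \prod_(i < n) h i) = (fun n => (\prod_(i < n) fine (h i))%:E).
  move=> hE; apply/funext => n; rewrite -prodEFin.
  by apply: eq_bigr => i _; rewrite -hE.
rewrite prodE //; apply: cvg_EFin; first exact: nearW.
rewrite prodE // in fr; move/fine_cvgP: fr => [_ fr].
apply: (cvg_prod_odd_bounded0 (phi := fine \o f) (gam := fine \o g) _ _ c1 _ fr)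
  => //= i.
- by rewrite -lte_fin -fE.
- by rewrite -!lee_fin -fE -gE.
- by move=> oi; rewrite -lee_fin -gE gc.
Unshelve. all: by end_near. Qed.

End extended_partial_products.

Lemma exists_notin_negligibleU d (T : measurableType d) (R : realType)
    (mu : {measure set T -> \bar R}) (D N E : set T) :
  measurable D -> measurable E -> mu.-negligible N -> (mu E < mu D)%E ->
  exists2 y, D y & ~ (N `|` E) y.
Proof.
move=> mD mE [N' [mN' N'0 NN']] ED; apply: contrapT => Dsub.
have DEN' : D `<=` E `|` N'.
  move=> y Dy; apply: contrapT => yEN'; apply: Dsub; exists y => //.
  by case=> [/NN' N'y|Ey]; apply: yEN'; [right|left].
have : (mu D <= mu (E `|` N'))%E.
  by rewrite le_measure ?inE //; exact: measurableU.
by rewrite measureU0 // leNgt ED.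
Qed.

Section finite_rectangles.
Variable R : realType.
Local Notation lambda := (@lebesgue_measure R).
Local Open Scope ereal_scope.
Implicit Types (A : set (nat -> R)) (C D : nat -> set R).

Lemma rect_Binf_measurable C :
  (forall i, measurable (C i)) -> Binf_measurable (rect C).
Proof.
move=> mC; have -> : rect C = \bigcap_i [set x | C i (x i)].
  by apply/seteqP; split=> [x Cx i _|x Cx i]; exact: Cx.
apply: (@bigcapT_measurable _ (g_sigma_algebraType (@cylinder R))) => i.
apply: sub_sigma_algebra; exists i.+1, (fun j => if j == i then C i else setT).
split=> [j|]; first by case: eqP => _; [exact: mC|exact: measurableT].
apply/seteqP; split=> x /=; first by move=> Cx j _; case: eqP => [->|].
by move/(_ i (ltnSn i)); rewrite eqxx.
Qed.

Definition rect_coverable A :=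
  exists (C : nat -> nat -> set R) (r : nat -> R),
    (forall n, finrect_vol (C n) (r n)) /\ A `<=` \bigcup_n rect (C n).

Lemma finrect_vol_ge0 C r : finrect_vol C r -> (0 <= r)%R.
Proof.
move=> [_ Cr]; rewrite -lee_fin; apply: cvge_ge Cr; apply: nearW => n.
exact: prode_ge0.
Qed.

Lemma mu_star_ge0 A : 0 <= mu_star A.
Proof.
apply/ereal_infP => _ [C [r [Cr [_ ->]]]].
apply: nneseries_ge0 => n _ _; rewrite lee_fin.
exact: finrect_vol_ge0 (Cr n).
Qed.

Lemma mu_star_not_coverable A : ~ rect_coverable A -> mu_star A = +oo.
Proof.
move=> Anc; rewrite /mu_star; set S := [set _ | _].
suff -> : S = set0 by exact: ereal_inf0.
by apply/seteqP; split => // s [C [r [Cr [AC _]]]]; apply: Anc; exists C, r.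
Qed.

Lemma mu_star_null_cover A (C : nat -> nat -> set R) :
  (forall n, finrect_vol (C n) 0) -> A `<=` \bigcup_n rect (C n) ->
  mu_star A = 0.
Proof.
move=> C0 AC; apply/eqP; rewrite eq_le mu_star_ge0 andbT.
apply: ereal_inf_lbound; exists C, (fun=> 0%R); do 2!split => //.
by rewrite eseries0.
Qed.

Lemma finrect_vol_setI C r D (c : R) :
  finrect_vol C r -> (forall i, measurable (D i)) ->
  (c < 1)%R -> (forall i, odd i -> lambda (D i) <= c%:E) ->
  finrect_vol (fun i => C i `&` D i) 0.
Proof.
move=> [mC Cr] mD c1 Dc; have mCD i := measurableI _ _ (mC i) (mD i).
pose lambdaC i := lambda (C i); pose lambdaCD i := lambda (C i `&` D i).
split=> //.
apply: (cvg_prode_odd_bounded0 (f := lambdaC) (g := lambdaCD) _ c1 _ Cr) => i.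
  by rewrite measure_ge0 le_measure ?inE //; [exact: mCD|exact: mC].
move=> oi; rewrite (le_trans _ (Dc i oi)) // le_measure ?inE //;
  [exact: mCD|exact: mD].
Qed.

Lemma rect_not_coverable D : (forall i, measurable (D i)) ->
  (forall i, 0 < lambda (D i)) -> (forall n, lambda (D n.*2) = +oo) ->
  ~ rect_coverable (rect D).
Proof.
move=> mD D0 Dinfty [C [r [Cr DC]]].
have mC n i : measurable (C n i) by case: (Cr n).
pose N i := \bigcup_m (if lambda (C m i) == 0 then C m i else set0).
pose E i := if ~~ odd i && (lambda (C i./2 i) < +oo) then C i./2 i else set0.
have N0 i : lambda.-negligible (N i).
  apply: negligible_bigcup => m.
  case: eqP => [Cmi0|_]; last exact: negligible_set0.
  by exists (C m i); split => //; exact: mC.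
have mE i : measurable (E i) by rewrite /E; case: ifP.
have E_lt i : lambda (E i) < lambda (D i).
  rewrite /E; case: ifP => [/andP[ei Clty]|_]; last by rewrite measure0.
  suff -> : lambda (D i) = +oo by [].
  by rewrite -(odd_double_half i) (negbTE ei) add0n Dinfty.
have /choice[y yD] : forall i, exists t, D i t /\ ~ (N i `|` E i) t.
  move=> i; have [t Dt tNE] := exists_notin_negligibleU (mu := lambda)
    (mD i) (mE i) (N0 i) (E_lt i).
  by exists t.
have [n _ Cy] := DC y (fun i => (yD i).1).
have [[i Cni0]|Cn_neq0] := pselect (exists i, lambda (C n i) = 0).
  by apply: (yD i).2; left; exists n => //; rewrite Cni0 eqxx; exact: Cy.
have Cn0 i : 0 < lambda (C n i).
  rewrite lt0e measure_ge0 andbT.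
  by apply/eqP => Cni0; apply: Cn_neq0; exists i.
have Clty : lambda (C n n.*2) < +oo.
  exact: (cvg_prode_factor_lty (f := fun i => lambda (C n i)) Cn0 (Cr n).2).
by apply: (yD n.*2).2; right; rewrite /E odd_double /= doubleK Clty; exact: Cy.
Qed.

Definition atom_side (i : nat) : set R :=
  if odd i then `[0%R, 2^-1%R]%classic else setT.

Lemma atom_side_measurable i : measurable (atom_side i).
Proof. by rewrite /atom_side; case: odd => //; exact: measurable_itv. Qed.

Lemma lebesgue_atom_side_odd i : odd i -> lambda (atom_side i) = (2^-1)%:E.
Proof.
move=> oi; rewrite /atom_side oi lebesgue_measure_itv /= lte_fin invr_gt0.
by rewrite ltr0n /= oppr0 adde0.
Qed.

Lemma lebesgue_atom_side_even i : ~~ odd i -> lambda (atom_side i) = +oo.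
Proof.
by rewrite /atom_side => /negbTE->; rewrite -set_itvNyy lebesgue_measure_itv.
Qed.

Lemma lebesgue_atom_side_gt0 i : 0 < lambda (atom_side i).
Proof.
have [oi|ei] := boolP (odd i); last by rewrite lebesgue_atom_side_even.
by rewrite lebesgue_atom_side_odd // lte_fin invr_gt0.
Qed.

End finite_rectangles.

Theorem propositionA2 (R : realType) :
  exists A : set (nat -> R), mu_atom A.
Proof.
pose A := rect (@atom_side R).
have A_infty : mu_star A = +oo%E.
  apply/mu_star_not_coverable/rect_not_coverable.
  - exact: atom_side_measurable.
  - exact: lebesgue_atom_side_gt0.
  - by move=> n; rewrite lebesgue_atom_side_even ?odd_double.
exists A; split; first exact: rect_Binf_measurable (@atom_side_measurable R).
split=> [|B _ BA]; first by rewrite A_infty.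
have [[C [r [Cr BC]]]|B_nc] := pselect (rect_coverable B); last first.
  by right; rewrite A_infty mu_star_not_coverable.
left; apply: (mu_star_null_cover (C := fun n i => C n i `&` atom_side i)).
  have half_lt1 : 2^-1 < 1 :> R by rewrite invf_lt1 ?ltr1n.
  move=> n; apply: (finrect_vol_setI (Cr n) (@atom_side_measurable R) half_lt1).
  by move=> i oi; rewrite lebesgue_atom_side_odd.
move=> x Bx; have [n _ Cx] := BC x Bx; exists n => // i.
by split; [exact: Cx|exact: BA _ Bx i].
Qed.
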